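(* Consider the Disjoint Domination Game in which Dom is allowed to pass (in any turn except the very first move of the game) but Sepy is not allowed to pass. Then: (1) for every finite simple graph $G$ without isolated vertices, Dom has a winning strategy in the Sepy-start game on $G$; (2) for every finite simple graph $G$ without isolated vertices that has at least one Dom-win component, Dom has a winning strategy in the Dom-start game on $G$.
   Context: For a vertex $v$, $N[v]$ denotes its closed neighborhood. The Disjoint Domination Game on an isolate-free graph $G$ is played by Dom and Sepy with colors $p$ and $b$; $V_p,V_b$ denote the current sets of vertices of each color. Players alternate; either player may use either color. A move chooses a vertex $v$ and a color $c$ such that (i) $v$ is uncolored and (ii) some $u\in N[v]$ satisfies $N[u]\cap V_c=\emptyset$ (before the move); then $v$ gets color $c$. A player must make a legal move on his turn whenever one is available, unless he is the player allowed to pass (passing is never allowed on the first move of the game). The game ends as soon as either (s* ) some vertex $v$ has $N[v]\subseteq V_p$ or $N[v]\subseteq V_b$ — Sepy wins; or (d* ) both $V_p$ and $V_b$ are dominating sets of $G$ — Dom wins. In the Dom-start (Sepy-start) game Dom (Sepy) moves first. A Dom-win component of $G$ is a connected component $H$ of $G$ such that Dom has a winning strategy in the Dom-start Disjoint Domination Game (without passing) played on $H$ alone. *)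

From mathcomp Require Import all_boot.
Set Implicit Arguments. Unset Strict Implicit. Unset Printing Implicit Defensive.

Definition simple_graph (T : finType) (e : rel T) : Prop :=
  symmetric e /\ irreflexive e.

Definition isolate_free (T : finType) (e : rel T) : Prop :=
  forall v : T, exists u : T, e v u.

Section DisjointDominationGame.
Variables (T : finType) (e : rel T).

Definition cnbhd (v : T) : {set T} := [set u | (u == v) || e v u].

Definition dominating (D : {set T}) : bool :=
  [forall v, [exists u in D, u \in cnbhd v]].

Definition color_set (c : bool) (Vp Vb : {set T}) : {set T} :=
  if c then Vp else Vb.

Definition legal (Vp Vb : {set T}) (v : T) (c : bool) : bool :=
  (v \notin Vp :|: Vb) &&
  [exists u in cnbhd v, [disjoint cnbhd u & color_set c Vp Vb]].

Definition play_p (Vp : {set T}) (v : T) (c : bool) : {set T} :=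
  if c then v |: Vp else Vp.
Definition play_b (Vb : {set T}) (v : T) (c : bool) : {set T} :=
  if c then Vb else v |: Vb.

Definition sepy_end (Vp Vb : {set T}) : bool :=
  [exists v, (cnbhd v \subset Vp) || (cnbhd v \subset Vb)].
Definition dom_end (Vp Vb : {set T}) : bool :=
  dominating Vp && dominating Vb.
Definition ended (Vp Vb : {set T}) : bool := sepy_end Vp Vb || dom_end Vp Vb.

(* dom_wins dompass domturn first Vp Vb : Dom has a winning strategy from the
   position (Vp, Vb) where it is Dom's turn iff domturn, [first] says that
   this is the very first move of the game, and [dompass] says whether Dom
   is allowed to pass.  A player with no
   legal move available simply does not move (the turn goes over). *)
Inductive dom_wins (dompass : bool) : bool -> bool -> {set T} -> {set T} -> Prop :=
| dw_end domturn first Vp Vb :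
    dom_end Vp Vb -> ~~ sepy_end Vp Vb -> dom_wins dompass domturn first Vp Vb
| dw_move first Vp Vb v c :
    ~~ ended Vp Vb -> legal Vp Vb v c ->
    dom_wins dompass false false (play_p Vp v c) (play_b Vb v c) ->
    dom_wins dompass true first Vp Vb
| dw_pass Vp Vb :
    dompass -> ~~ ended Vp Vb ->
    dom_wins dompass false false Vp Vb ->
    dom_wins dompass true false Vp Vb
| dw_dom_stuck first Vp Vb :
    ~~ ended Vp Vb -> (forall v c, ~~ legal Vp Vb v c) ->
    dom_wins dompass false false Vp Vb ->
    dom_wins dompass true first Vp Vb
| dw_sepy first Vp Vb :
    ~~ ended Vp Vb -> (exists v c, legal Vp Vb v c) ->
    (forall v c, legal Vp Vb v c ->
       dom_wins dompass true false (play_p Vp v c) (play_b Vb v c)) ->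
    dom_wins dompass false first Vp Vb
| dw_sepy_stuck first Vp Vb :
    ~~ ended Vp Vb -> (forall v c, ~~ legal Vp Vb v c) ->
    dom_wins dompass true false Vp Vb ->
    dom_wins dompass false first Vp Vb.

Definition dom_start_win (dompass : bool) : Prop :=
  dom_wins dompass true true set0 set0.
Definition sepy_start_win (dompass : bool) : Prop :=
  dom_wins dompass false true set0 set0.

Definition is_component (C : {set T}) : Prop :=
  exists x : T, C = [set y | connect e x y].

End DisjointDominationGame.

Definition induced_rel (T : finType) (e : rel T) (C : {set T})
  : rel {x : T | x \in C} := fun x y => e (val x) (val y).
Arguments induced_rel {T} e C.

Definition dom_win_component (T : finType) (e : rel T) (C : {set T}) : Prop :=
  is_component e C /\ dom_start_win (induced_rel e C) false.

From mathcomp Require Import all_boot.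
Set Implicit Arguments. Unset Strict Implicit. Unset Printing Implicit Defensive.

(* Pairing strategy: when Sepy colours w, Dom makes the closed neighbourhood
   N[w] meet both colours, passing if it already does.  Otherwise N[w] misses
   the other colour, and since Sepy's move was legal and G has no isolated
   vertex, N[w] contains an uncoloured vertex z, which Dom legally colours with
   the other colour; then both N[w] and N[z] are bicoloured.  As every coloured
   vertex keeps a bicoloured closed neighbourhood, Sepy never wins, and the
   finite game ends with both colour classes dominating.
   In the Dom-start game Dom opens inside a Dom-win component C and follows
   its winning strategy there while pairing against Sepy's moves outside C.
   Closed neighbourhoods of vertices of C stay inside C and those of vertices
   outside C stay outside, so the two strategies do not interfere; once Dom
   has won on C, pairing alone finishes the game. *)

Section Positions.
Variables (T : finType) (e : rel T).
Implicit Types (A B Vp Vb : {set T}) (u v w x : T) (c d : bool).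

Lemma not_disjointP A B :
  reflect (exists2 x, x \in A & x \in B) (~~ [disjoint A & B]).
Proof.
rewrite disjoint_subset; apply: (iffP subsetPn) => -[x xA xB]; exists x => //.
  by rewrite inE negbK in xB.
by rewrite inE negbK.
Qed.

Lemma in_cnbhd u v : (u \in cnbhd e v) = (u == v) || e v u.
Proof. by rewrite inE. Qed.

Lemma cnbhd_refl v : v \in cnbhd e v.
Proof. by rewrite in_cnbhd eqxx. Qed.

Lemma color_set_play Vp Vb v c d :
  color_set d (play_p Vp v c) (play_b Vb v c) =
  if d == c then v |: color_set d Vp Vb else color_set d Vp Vb.
Proof. by case: c; case: d. Qed.

Lemma mem_color_set_play Vp Vb v c : v \in color_set c (play_p Vp v c) (play_b Vb v c).
Proof. by rewrite color_set_play eqxx setU11. Qed.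

Lemma color_set_play_subset Vp Vb v c d :
  color_set d Vp Vb \subset color_set d (play_p Vp v c) (play_b Vb v c).
Proof. by rewrite color_set_play; case: eqP => _; rewrite ?subsetU1. Qed.

Lemma setU_play Vp Vb v c : play_p Vp v c :|: play_b Vb v c = v |: (Vp :|: Vb).
Proof. by case: c; [rewrite /= setUA | rewrite /= setUCA]. Qed.

Lemma setU_color_set Vp Vb c : color_set c Vp Vb :|: color_set (~~ c) Vp Vb = Vp :|: Vb.
Proof. by case: c; rewrite // setUC. Qed.

Lemma color_set_subset Vp Vb c : color_set c Vp Vb \subset Vp :|: Vb.
Proof. by rewrite -(setU_color_set _ _ c) subsetUl. Qed.

Lemma disjoint_color_set Vp Vb c :
  [disjoint Vp & Vb] -> [disjoint color_set c Vp Vb & color_set (~~ c) Vp Vb].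
Proof. by case: c; rewrite // disjoint_sym. Qed.

Lemma disjoint_play Vp Vb w c : [disjoint Vp & Vb] -> w \notin Vp :|: Vb ->
  [disjoint play_p Vp w c & play_b Vb w c].
Proof.
rewrite -!setI_eq0 => /eqP/setP dis wn; apply/eqP/setP => x; have := dis x.
by case: c; rewrite /= !inE; case: eqP => [->|_]; move: wn; rewrite !inE;
  case: (w \in Vp); case: (w \in Vb).
Qed.

Lemma legal_uncoloured Vp Vb w c : legal e Vp Vb w c -> w \notin Vp :|: Vb.
Proof. by case/andP. Qed.

Lemma card_uncoloured_play Vp Vb w c : w \notin Vp :|: Vb ->
  #|~: (play_p Vp w c :|: play_b Vb w c)| < #|~: (Vp :|: Vb)|.
Proof.
by move=> wn; rewrite setU_play; apply/proper_card; rewrite properC properUr ?sub1set.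
Qed.

Lemma sepy_endP Vp Vb :
  reflect (exists v c, cnbhd e v \subset color_set c Vp Vb) (sepy_end e Vp Vb).
Proof.
apply: (iffP existsP) => [[v /orP[sub|sub]]|[v [[] sub]]]; exists v;
  by [exists true | exists false | rewrite sub | rewrite sub orbT].
Qed.

Lemma dom_endP Vp Vb :
  reflect (forall v c, ~~ [disjoint cnbhd e v & color_set c Vp Vb]) (dom_end e Vp Vb).
Proof.
have domP (D : {set T}) : reflect (forall v, ~~ [disjoint cnbhd e v & D]) (dominating e D).
  apply: (iffP forallP) => dom v.
    by have /existsP[u /andP[uD uv]] := dom v; apply/not_disjointP; exists u.
  by have /not_disjointP[u uv uD] := dom v; apply/existsP; exists u; rewrite uD.
apply: (iffP andP) => [[/domP domp /domP domb] v []//|dom].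
by split; apply/domP => v; [apply: (dom v true) | apply: (dom v false)].
Qed.

Lemma dom_wins_ongoing dp dt first Vp Vb : ~~ sepy_end e Vp Vb ->
  (~~ ended e Vp Vb -> dom_wins e dp dt first Vp Vb) -> dom_wins e dp dt first Vp Vb.
Proof.
move=> nse win; have [de|nde] := boolP (dom_end e Vp Vb); first exact: dw_end.
by apply: win; rewrite /ended negb_or nse.
Qed.

Lemma not_dom_end0 v : ~~ dom_end e set0 set0.
Proof. by apply/dom_endP => /(_ v true); rewrite /= disjoints_subset setC0 subsetT. Qed.

Definition bicoloured Vp Vb u :=
  forall c, ~~ [disjoint cnbhd e u & color_set c Vp Vb].

Lemma bicoloured_of Vp Vb u x y c : x \in cnbhd e u -> y \in cnbhd e u ->
  x \in color_set c Vp Vb -> y \in color_set (~~ c) Vp Vb -> bicoloured Vp Vb u.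
Proof.
move=> xu yu xc yc d; apply/not_disjointP.
case: (eqVneq d c) => [->|dc]; first by exists x.
by exists y => //; move: dc yc; clear; case: c; case: d.
Qed.

Lemma bicoloured_play Vp Vb v c u :
  bicoloured Vp Vb u -> bicoloured (play_p Vp v c) (play_b Vb v c) u.
Proof.
move=> bic d; have /not_disjointP[x xu xd] := bic d; apply/not_disjointP.
by exists x => //; apply: (subsetP (color_set_play_subset _ _ _ _ _)).
Qed.

Lemma bicoloured_not_monochrome Vp Vb u c : [disjoint Vp & Vb] ->
  bicoloured Vp Vb u -> ~~ (cnbhd e u \subset color_set c Vp Vb).
Proof.
move=> dis /(_ (~~ c)) /not_disjointP[x xu xc]; apply/negP => /subsetP/(_ x xu).
by move=> xc'; rewrite (disjointFr (disjoint_color_set c dis) xc') in xc.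
Qed.

Lemma not_sepy_end Vp Vb :
  (forall v c, v \in Vp :|: Vb -> ~~ (cnbhd e v \subset color_set c Vp Vb)) ->
  ~~ sepy_end e Vp Vb.
Proof.
move=> mono; apply/sepy_endP => -[v [c vc]]; move: (vc); apply/negP; apply: mono.
exact: subsetP (color_set_subset _ _ c) _ (subsetP vc _ (cnbhd_refl v)).
Qed.

End Positions.

Section Moves.
Variables (T : finType) (e : rel T).
Hypothesis e_sym : symmetric e.
Implicit Types (Vp Vb : {set T}) (u v w : T) (c d : bool).

Lemma cnbhd_sym u v : (u \in cnbhd e v) = (v \in cnbhd e u).
Proof. by rewrite !in_cnbhd eq_sym e_sym. Qed.

Lemma exists_legal Vp Vb : ~~ ended e Vp Vb -> exists v c, legal e Vp Vb v c.
Proof.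
rewrite /ended negb_or => /andP[nse nde].
have /existsP[u /existsP[c dis]] :
    [exists u, [exists c, [disjoint cnbhd e u & color_set c Vp Vb]]].
  apply: contraR nde; rewrite negb_exists => /forallP free; apply/dom_endP => v c.
  by have := free v; rewrite negb_exists => /forallP.
have [/existsP[v /andP[vu vn]]|] := boolP [exists v in cnbhd e u, v \notin Vp :|: Vb].
  by exists v, c; rewrite /legal vn; apply/existsP; exists u; rewrite -cnbhd_sym vu.
rewrite negb_exists => /forallP full; case/negP: nse; apply/sepy_endP.
exists u, (~~ c); apply/subsetP => x xu; have := full x.
by rewrite xu negbK -(setU_color_set _ _ c) in_setU (disjointFr dis xu).
Qed.

Hypotheses (e_irr : irreflexive e) (e_iso : isolate_free e).

Lemma legal_not_monochrome Vp Vb w c d : legal e Vp Vb w c ->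
  ~~ (cnbhd e w \subset color_set d (play_p Vp w c) (play_b Vb w c)).
Proof.
case/andP=> wn /existsP[u /andP[uw dis]]; apply/negP => /subsetP sub.
have [x [xu xw xnw]] : exists x, [/\ x \in cnbhd e u, x \in cnbhd e w & x != w].
  case: (eqVneq u w) => [->|unw]; last by exists u; rewrite cnbhd_refl.
  have [y ewy] := e_iso w; exists y; rewrite in_cnbhd ewy orbT.
  by split=> //; apply: contraTneq ewy => ->; rewrite e_irr.
have := sub x xw; have := sub w (cnbhd_refl _ w); rewrite !color_set_play.
case: eqP => [-> _|_ /(subsetP (color_set_subset _ _ _))]; last by rewrite (negPf wn).
by rewrite in_setU1 (negPf xnw) (disjointFr dis xu).
Qed.

Lemma pairing_reply Vp Vb w c : legal e Vp Vb w c ->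
  let Vp' := play_p Vp w c in let Vb' := play_b Vb w c in
  bicoloured e Vp' Vb' w \/
  exists2 z, legal e Vp' Vb' z (~~ c) &
    let Vp'' := play_p Vp' z (~~ c) in let Vb'' := play_b Vb' z (~~ c) in
    [/\ z \in cnbhd e w, bicoloured e Vp'' Vb'' w & bicoloured e Vp'' Vb'' z].
Proof.
move=> L Vp' Vb'; have wc : w \in color_set c Vp' Vb' by apply: mem_color_set_play.
have [dis|/not_disjointP[y yw yc]] :=
  boolP [disjoint cnbhd e w & color_set (~~ c) Vp' Vb']; last first.
  by left; apply: bicoloured_of (cnbhd_refl _ w) yw wc yc.
right; have /subsetPn[z zw znc] := legal_not_monochrome c L.
have zn : z \notin Vp' :|: Vb'.
  by rewrite -(setU_color_set _ _ c) in_setU (negPf znc) (disjointFr dis zw).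
exists z.
  by rewrite /legal zn; apply/existsP; exists w; rewrite -cnbhd_sym zw.
have wc' := subsetP (color_set_play_subset _ _ z (~~ c) c) w wc.
have zc' := mem_color_set_play Vp' Vb' z (~~ c).
split=> //; first exact: bicoloured_of (cnbhd_refl _ w) zw wc' zc'.
by apply: bicoloured_of _ (cnbhd_refl _ z) wc' zc'; rewrite cnbhd_sym.
Qed.

End Moves.

Section Pairing.
Variables (T : finType) (e : rel T).
Implicit Types (C Vp Vb : {set T}) (u v w z : T) (c d : bool).

Definition pairing_inv C Vp Vb :=
  [disjoint Vp & Vb] /\
  forall u, u \notin C -> u \in Vp :|: Vb -> bicoloured e Vp Vb u.

Lemma pairing_inv0 C : pairing_inv C set0 set0.
Proof. by split=> [|u _]; rewrite ?setU0 ?inE // -setI_eq0 set0I. Qed.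

Lemma pairing_inv_play C Vp Vb w c : pairing_inv C Vp Vb -> w \notin Vp :|: Vb ->
  (w \notin C -> bicoloured e (play_p Vp w c) (play_b Vb w c) w) ->
  pairing_inv C (play_p Vp w c) (play_b Vb w c).
Proof.
move=> [dis bic] wn bicw; split; first exact: disjoint_play.
move=> u uC; rewrite setU_play in_setU1 => /predU1P[uw|uc].
  by rewrite uw in uC *; apply: bicw.
by apply: bicoloured_play; apply: bic.
Qed.

Lemma pairing_inv_reply C Vp Vb w c z d :
  let Vp' := play_p Vp w c in let Vb' := play_b Vb w c in
  let Vp'' := play_p Vp' z d in let Vb'' := play_b Vb' z d in
  pairing_inv C Vp Vb -> w \notin Vp :|: Vb -> z \notin Vp' :|: Vb' ->
  bicoloured e Vp'' Vb'' w -> bicoloured e Vp'' Vb'' z -> pairing_inv C Vp'' Vb''.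
Proof.
move=> Vp' Vb' Vp'' Vb'' [dis bic] wn zn bicw bicz.
split; first by apply: disjoint_play => //; apply: disjoint_play.
move=> u uC; rewrite !setU_play !in_setU1 => /predU1P[->//|/predU1P[->//|uc]].
by do 2!apply: bicoloured_play; apply: bic.
Qed.

Lemma not_sepy_end_pairing C Vp Vb :
  (forall u c, u \in C -> ~~ (cnbhd e u \subset color_set c Vp Vb)) ->
  pairing_inv C Vp Vb -> ~~ sepy_end e Vp Vb.
Proof.
move=> inside [dis bic]; apply: not_sepy_end => u c uc.
by have [/inside//|uC] := boolP (u \in C); apply/bicoloured_not_monochrome/bic.
Qed.

Hypotheses (e_irr : irreflexive e) (e_iso : isolate_free e).

Lemma not_sepy_end_play C Vp Vb w c :
  let Vp' := play_p Vp w c in let Vb' := play_b Vb w c in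
  (forall u d, u \in C -> ~~ (cnbhd e u \subset color_set d Vp' Vb')) ->
  pairing_inv C Vp Vb -> legal e Vp Vb w c -> ~~ sepy_end e Vp' Vb'.
Proof.
move=> Vp' Vb' inside [dis bic] L; apply: not_sepy_end => u d.
rewrite setU_play in_setU1 => /predU1P[->|uc]; first exact: legal_not_monochrome.
have [/inside//|uC] := boolP (u \in C).
apply/bicoloured_not_monochrome/bicoloured_play/bic => //.
exact: disjoint_play (legal_uncoloured L).
Qed.

End Pairing.

(* Dom pairs outside the closed set C; [inside] describes the positions that
   Dom's separate strategy on C may face, and is unaffected by moves off C. *)
Section SepyTurn.
Variables (T : finType) (e : rel T).
Hypotheses (e_sym : symmetric e) (e_irr : irreflexive e) (e_iso : isolate_free e).
Variables (C : {set T}) (inside : {set T} -> {set T} -> Prop).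
Hypothesis C_closed : forall u v, u \in C -> e u v -> v \in C.
Hypothesis inside_not_monochrome : forall Vp Vb, inside Vp Vb ->
  forall u c, u \in C -> ~~ (cnbhd e u \subset color_set c Vp Vb).
Hypothesis inside_play_outside : forall Vp Vb w c, inside Vp Vb -> w \notin C ->
  inside (play_p Vp w c) (play_b Vb w c).
Hypothesis inside_move_win : forall Vp Vb w c,
  inside Vp Vb -> pairing_inv e C Vp Vb -> w \in C -> legal e Vp Vb w c ->
  dom_wins e true true false (play_p Vp w c) (play_b Vb w c).

Lemma dom_wins_sepy_turn Vp Vb first : inside Vp Vb -> pairing_inv e C Vp Vb ->
  dom_wins e true false first Vp Vb.
Proof.
have [n] := ubnP #|~: (Vp :|: Vb)|; elim: n Vp Vb first => // n IH Vp Vb first.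
move=> lt_n ins inv; have dis := inv.1.
apply: dom_wins_ongoing (not_sepy_end_pairing (inside_not_monochrome ins) inv) _.
move=> ne; apply: dw_sepy ne (exists_legal e_sym ne) _ => w c L.
have [wC|wnC] := boolP (w \in C); first exact: inside_move_win.
have wn := legal_uncoloured L; have ins' := inside_play_outside c ins wnC.
have lt_n' := leq_trans (card_uncoloured_play c wn) lt_n.
apply: dom_wins_ongoing (not_sepy_end_play e_irr e_iso (inside_not_monochrome ins') inv L) _.
move=> ne'; case: (pairing_reply e_sym e_irr e_iso L) => [bicw|[z Lz [zw bicw bicz]]].
  by apply: dw_pass => //; apply: IH => //; apply: pairing_inv_play.
have znC : z \notin C.
  apply: contra wnC => zC; move: zw; rewrite in_cnbhd => /predU1P[<-//|].
  by rewrite e_sym; apply: C_closed.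
have zn := legal_uncoloured Lz.
apply: dw_move ne' Lz _; apply: IH; last exact: pairing_inv_reply.
  exact: leq_trans (card_uncoloured_play _ zn) (ltnW lt_n').
exact: inside_play_outside.
Qed.

End SepyTurn.

Lemma dom_wins_pairing (T : finType) (e : rel T) (Vp Vb : {set T}) dt first :
  symmetric e -> irreflexive e -> isolate_free e ->
  pairing_inv e set0 Vp Vb -> ~~ (dt && first) -> dom_wins e true dt first Vp Vb.
Proof.
move=> e_sym e_irr e_iso inv not_first.
have sepy_turn first' : dom_wins e true false first' Vp Vb.
  apply: (dom_wins_sepy_turn e_sym e_irr e_iso (C := set0) (inside := fun _ _ => True)) => //
    [u v|Vp' Vb' _ u c|Vp' Vb' w c _ _]; by rewrite inE.
case: dt not_first => //= /negPf->.
apply: dom_wins_ongoing (not_sepy_end_pairing _ inv) _ => [u c|ne]; first by rewrite inE.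
exact: dw_pass.
Qed.

Section Component.
Variables (T : finType) (e : rel T).
Hypotheses (e_sym : symmetric e) (e_irr : irreflexive e) (e_iso : isolate_free e).
Variables (C : {set T}) (x0 : T).
Hypothesis C_def : C = [set y | connect e x0 y].

Local Notation V := {x : T | x \in C}.
Local Notation eC := (induced_rel e C).
Implicit Types (S Vp Vb : {set T}) (P B : {set V}) (u v w : T) (c : bool).

Definition restrict S : {set V} := [set y | val y \in S].

Lemma component_closed u v : u \in C -> e u v -> v \in C.
Proof. by rewrite C_def !inE => x0u euv; apply: connect_trans x0u (connect1 euv). Qed.

Lemma induced_sym : symmetric eC.
Proof. by move=> x y; rewrite /induced_rel e_sym. Qed.

Lemma cnbhd_subset_component (x : V) : cnbhd e (val x) \subset C.
Proof.
apply/subsetP => y; rewrite in_cnbhd => /predU1P[->|]; first exact: valP.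
exact: component_closed (valP x).
Qed.

Lemma in_cnbhd_induced (x y : V) : (y \in cnbhd eC x) = (val y \in cnbhd e (val x)).
Proof. by rewrite !in_cnbhd. Qed.

Lemma disjoint_cnbhd_restrict (x : V) S :
  [disjoint cnbhd eC x & restrict S] = [disjoint cnbhd e (val x) & S].
Proof.
apply/idP/idP; apply: contraTT => /not_disjointP[y yx yS]; apply/not_disjointP.
  have yC := subsetP (cnbhd_subset_component x) y yx.
  by exists (Sub y yC : V); rewrite ?in_cnbhd_induced ?[_ \in restrict S]inE SubK.
by exists (val y); [rewrite -in_cnbhd_induced | rewrite inE in yS].
Qed.

Lemma subset_cnbhd_restrict (x : V) S :
  (cnbhd eC x \subset restrict S) = (cnbhd e (val x) \subset S).
Proof.
apply/subsetP/subsetP => sub y yx; last by rewrite inE sub -?in_cnbhd_induced.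
have yC := subsetP (cnbhd_subset_component x) y yx.
have /sub : Sub y yC \in cnbhd eC x by rewrite in_cnbhd_induced SubK.
by rewrite inE SubK.
Qed.

Lemma restrict_color_set Vp Vb c :
  color_set c (restrict Vp) (restrict Vb) = restrict (color_set c Vp Vb).
Proof. by case: c. Qed.

Lemma restrict_play_p Vp (x : V) c : restrict (play_p Vp (val x) c) = play_p (restrict Vp) x c.
Proof. by case: c => //; apply/setP => y; rewrite !inE. Qed.

Lemma restrict_play_b Vb (x : V) c : restrict (play_b Vb (val x) c) = play_b (restrict Vb) x c.
Proof. by case: c => //; apply/setP => y; rewrite !inE. Qed.

Lemma restrict_setU1 S w : w \notin C -> restrict (w |: S) = restrict S.
Proof.
move=> wC; apply/setP => y; rewrite !inE; case: eqP => // yw.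
by have := valP y; rewrite yw (negPf wC).
Qed.

Lemma legal_restrict Vp Vb (x : V) c :
  legal eC (restrict Vp) (restrict Vb) x c = legal e Vp Vb (val x) c.
Proof.
rewrite /legal !inE; congr (_ && _); apply/existsP/existsP => -[y /andP[yx dis]].
  by exists (val y); rewrite -in_cnbhd_induced yx -disjoint_cnbhd_restrict -restrict_color_set.
exists (Sub y (subsetP (cnbhd_subset_component x) y yx)).
by rewrite in_cnbhd_induced SubK yx restrict_color_set disjoint_cnbhd_restrict.
Qed.

Lemma bicoloured_dom_end_restrict Vp Vb u : dom_end eC (restrict Vp) (restrict Vb) ->
  u \in C -> bicoloured e Vp Vb u.
Proof.
move/dom_endP=> dom uC c; have := dom (Sub u uC) c.
by rewrite restrict_color_set disjoint_cnbhd_restrict SubK.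
Qed.

Lemma not_monochrome_restrict Vp Vb : ~~ sepy_end eC (restrict Vp) (restrict Vb) ->
  forall u c, u \in C -> ~~ (cnbhd e u \subset color_set c Vp Vb).
Proof.
move=> nse u c uC; apply: contra nse => sub; apply/sepy_endP.
by exists (Sub u uC), c; rewrite restrict_color_set subset_cnbhd_restrict SubK.
Qed.

(* The last hypothesis is needed because Dom may not pass on the first move
   of the game, even when the game on C is already won. *)
Lemma dom_wins_lift dt first P B : dom_wins eC false dt first P B ->
  forall Vp Vb, restrict Vp = P -> restrict Vb = B -> pairing_inv e C Vp Vb ->
  (first -> dt -> ~~ dom_end eC P B) -> dom_wins e true dt first Vp Vb.
Proof.
elim=> {dt first P B}.
- move=> dt first P B de _ Vp Vb eP eB [dis bic] not_first.
  apply: dom_wins_pairing => //.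
    split=> // u _; have [uC _|] := boolP (u \in C); last exact: bic.
    by apply: bicoloured_dom_end_restrict; rewrite ?eP ?eB.
  by apply/negP=> /andP[dt1 first1]; move: (not_first first1 dt1); rewrite de.
- move=> first P B x c ne L _ IH Vp Vb eP eB inv _.
  have /norP[nse _] := ne.
  have L' : legal e Vp Vb (val x) c by rewrite -legal_restrict eP eB.
  apply: dom_wins_ongoing (not_sepy_end_pairing _ (inv)) _.
    by apply: not_monochrome_restrict; rewrite eP eB.
  move=> ne'; apply: dw_move ne' (L') _; apply: IH => //.
  + by rewrite restrict_play_p eP.
  + by rewrite restrict_play_b eB.
  + by apply: pairing_inv_play inv (legal_uncoloured L') _; rewrite (valP x).
- by [].
- by move=> first P B /(exists_legal induced_sym)[x [c L]] /(_ x c); rewrite L.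
- move=> first P B ne _ _ IH Vp Vb eP eB inv _; have /norP[nse _] := ne.
  pose inside A A' := restrict A = P /\ restrict A' = B.
  apply: (dom_wins_sepy_turn e_sym e_irr e_iso (C := C) (inside := inside)) => //.
  + exact: component_closed.
  + by move=> A A' [eA eA']; apply: not_monochrome_restrict; rewrite eA eA'.
  + by move=> A A' w c [eA eA'] wC; rewrite /inside; case: c; rewrite /= restrict_setU1.
  + move=> A A' w c [eA eA'] invA wC L.
    have L' : legal eC P B (exist _ w wC) c by rewrite -eA -eA' legal_restrict.
    apply: (IH _ _ L') => //.
    * by rewrite -eA -restrict_play_p.
    * by rewrite -eA' -restrict_play_b.
    * by apply: pairing_inv_play invA (legal_uncoloured L) _; rewrite wC.
- by move=> first P B /(exists_legal induced_sym)[x [c L]] /(_ x c); rewrite L.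
Qed.

Lemma dom_start_win_of_component : dom_start_win eC false -> dom_start_win e true.
Proof.
have restrict0 : restrict set0 = set0 by apply/setP => y; rewrite !inE.
have x0C : x0 \in C by rewrite C_def inE connect0.
move=> win; apply: (dom_wins_lift win) => //; first exact: pairing_inv0.
by move=> _ _; apply: (not_dom_end0 _ (Sub x0 x0C)).
Qed.

End Component.

Theorem mainTheorem7 :
  forall (T : finType) (e : rel T),
    simple_graph e -> isolate_free e ->
    sepy_start_win e true /\
    ((exists C : {set T}, dom_win_component e C) -> dom_start_win e true).
Proof.
move=> T e [e_sym e_irr] e_iso; split; first exact: dom_wins_pairing (pairing_inv0 _ _) _.
by move=> [C [[x0 C_def] win]]; exact: (dom_start_win_of_component e_sym e_irr e_iso C_def win).
Qed.
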